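(* There is an effective construction that, given two mtts $M_1,M_2$ (total, deterministic, without look-ahead) with the same input alphabet $\Sigma$ and output alphabet $\Delta$, both of LSOI, produces an mtt $M$ such that $M$ is of LSOI if and only if $M_1(t)=M_2(t)$ for every $t\in T_\Sigma$. Consequently, deciding whether a given mtt is of LSOI is at least as hard as deciding equivalence of mtts that are of LSOI.
   Context: A (total, deterministic) macro tree transducer (mtt) $M=(Q,\Sigma,\Delta,q_0,R)$: $Q$ a ranked alphabet of states, $\Sigma,\Delta$ ranked input/output alphabets, $q_0\in Q$ of rank $0$, and for each $q\in Q$ of rank $m$ and $\sigma\in\Sigma$ of rank $k$ exactly one rule $\langle q,\sigma(x_1,\dots,x_k)\rangle(y_1,\dots,y_m)\to t$ where $t$ is a tree over $\Delta$, the parameters $y_1,\dots,y_m$ (rank 0) and symbols $\langle q',x_i\rangle$ ($q'\in Q$, $i\in[k]$) of the rank of $q'$. $M_q(\sigma(s_1,\dots,s_k))$ is obtained from the right-hand side by replacing (recursively, innermost first) each subtree $\langle q',x_i\rangle(\xi_1,\dots,\xi_n)$ by $M_{q'}(s_i)$ with each $y_j$ replaced by (the result for) $\xi_j$; $M(s)=M_{q_0}(s)$, a total function $T_\Sigma\to T_\Delta$. For a tree $t$, $\mathrm{sub}(t)=\{t/u\mid u \text{ a node of } t\}$ is its set of (distinct) subtrees and $|t|$ its number of nodes. A total function $\tau:T_\Sigma\to T_\Delta$ is of LSOI (linear size-to-number-of-distinct-output-subtrees increase) if there is $c$ such that $|\mathrm{sub}(\tau(s))|\le c\cdot|s|$ for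 all $s\in T_\Sigma$. *)

From mathcomp Require Import all_boot.
Set Implicit Arguments. Unset Strict Implicit. Unset Printing Implicit Defensive.

(* Ranked trees.  A tree is [GenTree.Node a ts] with label a : nat and       *)
(* children ts; [GenTree.tree void] has no leaves of the other kind, so it   *)
(* is exactly the type of finitely-branching node-labelled trees, with its   *)
(* canonical eqType structure (structural equality).                         *)
(* A ranked alphabet is a [seq nat]: symbol number a has rank [nth 0 r a].   *)
Definition tree := GenTree.tree void.

Fixpoint wf_tree (r : seq nat) (t : tree) : bool :=
  match t with
  | GenTree.Leaf v => match v with end
  | GenTree.Node a ts =>
      [&& a < size r, size ts == nth 0 r a &
       (fix go l := if l is c :: l' then wf_tree r c && go l' else true) ts]
  end.

Fixpoint tsize (t : tree) : nat :=
  match t with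
  | GenTree.Leaf _ => 1
  | GenTree.Node _ ts =>
      (fix go l := if l is c :: l' then tsize c + go l' else 0) ts + 1
  end.

Fixpoint subtrees (t : tree) : seq tree :=
  match t with
  | GenTree.Leaf _ => [:: t]
  | GenTree.Node _ ts =>
      t :: (fix go l := if l is c :: l' then subtrees c ++ go l' else [::]) ts
  end.

Definition nsub (t : tree) : nat := size (undup (subtrees t)).

(* Right-hand sides of mtt rules.                                           *)
(*   RPar j        : parameter y_(j+1)                                      *)
(*   RCall q i args: <q, x_(i+1)>(args)                                     *)
Inductive rhs : Type :=
| RSym of nat & seq rhs
| RPar of nat
| RCall of nat & nat & seq rhs.

(* An mtt: input alphabet Σ, output alphabet Δ, states Q (state 0 is the  *)
(* initial state q0), and the rule table: [nth (RPar 0) (nth [::] rules q) a] *)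
(* is the right-hand side of the rule for <q, a(x_1..x_k)>(y_1..y_m).       *)
Record mtt : Type := Mtt {
  in_ranks : seq nat;
  out_ranks : seq nat;
  st_ranks : seq nat;
  rules : seq (seq rhs)
}.

Definition rule (M : mtt) (q a : nat) : rhs := nth (RPar 0) (nth [::] (rules M) q) a.

Fixpoint wf_rhs (M : mtt) (m k : nat) (r : rhs) : bool :=
  let go := fix go l := if l is c :: l' then wf_rhs M m k c && go l' else true in
  match r with
  | RSym d args => [&& d < size (out_ranks M), size args == nth 0 (out_ranks M) d & go args]
  | RPar j => j < m
  | RCall q i args =>
      [&& q < size (st_ranks M), i < k, size args == nth 0 (st_ranks M) q & go args]
  end.

(* total deterministic mtt: exactly one well-formed rule per (q, sigma) *)
Definition wf_mtt (M : mtt) : Prop :=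
  [/\ 0 < size (st_ranks M), nth 0 (st_ranks M) 0 = 0,
      size (rules M) = size (st_ranks M),
      (forall q, q < size (st_ranks M) -> size (nth [::] (rules M) q) = size (in_ranks M)) &
      (forall q a, q < size (st_ranks M) -> a < size (in_ranks M) ->
         wf_rhs M (nth 0 (st_ranks M) q) (nth 0 (in_ranks M) a) (rule M q a))].

Definition dtree : tree := GenTree.Node 0 [::].

(* Instantiate a right-hand side: ys = values of the parameters,          *)
(* fs = for each input child i, the function (q, args) |-> M_q(s_i)(args). *)
Fixpoint inst (r : rhs) (ys : seq tree) (fs : seq (nat -> seq tree -> tree)) : tree :=
  let go := fix go l := if l is c :: l' then inst c ys fs :: go l' else [::] in
  match r with
  | RSym d args => GenTree.Node d (go args)
  | RPar j => nth dtree ys j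
  | RCall q i args => nth (fun _ _ => dtree) fs i q (go args)
  end.

Fixpoint msem (M : mtt) (s : tree) : nat -> seq tree -> tree :=
  match s with
  | GenTree.Leaf _ => fun _ _ => dtree
  | GenTree.Node a ss =>
      let fs := (fix go l := if l is c :: l' then msem M c :: go l' else [::]) ss in
      fun q ys => inst (rule M q a) ys fs
  end.

Definition mrun (M : mtt) (s : tree) : tree := msem M s 0 [::].

Definition LSOI (M : mtt) : Prop :=
  exists c : nat, forall s, wf_tree (in_ranks M) s -> nsub (mrun M s) <= c * tsize s.

Definition mtt_equiv (M1 M2 : mtt) : Prop :=
  forall s, wf_tree (in_ranks M1) s -> mrun M1 s = mrun M2 s.

(* Effectiveness: mu-recursive functions (Kleene) with relational semantics, *)
(* and a Goedel encoding of mtts into nat (Cantor pairing, injective).       *)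
Inductive murec : Type :=
| mZero
| mSucc
| mProj of nat
| mComp of murec & seq murec
| mPrim of murec & murec
| mMu of murec.

Inductive mueval : murec -> seq nat -> nat -> Prop :=
| ev_zero v : mueval mZero v 0
| ev_succ x v : mueval mSucc (x :: v) x.+1
| ev_proj i v : i < size v -> mueval (mProj i) v (nth 0 v i)
| ev_comp f gs v ws y :
    mueval_list gs v ws -> mueval f ws y -> mueval (mComp f gs) v y
| ev_prim0 f g v y : mueval f v y -> mueval (mPrim f g) (0 :: v) y
| ev_primS f g n v z y :
    mueval (mPrim f g) (n :: v) z -> mueval g (n :: z :: v) y ->
    mueval (mPrim f g) (n.+1 :: v) y
| ev_mu f v n :
    mueval f (n :: v) 0 -> (forall m, m < n -> exists k, mueval f (m :: v) k.+1) ->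
    mueval (mMu f) v n
with mueval_list : seq murec -> seq nat -> seq nat -> Prop :=
| evl_nil v : mueval_list [::] v [::]
| evl_cons g gs v w ws :
    mueval g v w -> mueval_list gs v ws -> mueval_list (g :: gs) v (w :: ws).

Definition cpair (x y : nat) : nat := ((x + y) * (x + y).+1)./2 + y.

Definition enc_seq (T : Type) (e : T -> nat) (l : seq T) : nat :=
  foldr (fun x acc => (cpair (e x) acc).+1) 0 l.

Fixpoint enc_rhs (r : rhs) : nat :=
  let go := fix go l := if l is c :: l' then (cpair (enc_rhs c) (go l')).+1 else 0 in
  match r with
  | RSym d args => cpair 0 (cpair d (go args))
  | RPar j => cpair 1 j
  | RCall q i args => cpair 2 (cpair q (cpair i (go args)))
  end.

Definition enc_mtt (M : mtt) : nat :=
  cpair (enc_seq id (in_ranks M))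
    (cpair (enc_seq id (out_ranks M))
       (cpair (enc_seq id (st_ranks M)) (enc_seq (enc_seq enc_rhs) (rules M)))).

(* On an input [root(t, A^n(B))] the mtt [equiv_test_mtt M1 M2] computes
   [w1 = M1 t] and [w2 = M2 t] and then the full binary tree of depth [n]
   whose leaves are all the combs [z w_1 ... w_n] with each [w_i] in
   [{w1, w2}]; every other input is sent to a fixed leaf.  If [w1 = w2] the
   two children of each inner node coincide, so besides the subtrees of
   [w1] the output has only [O(n)] distinct subtrees, which is linear in the
   input because [M1] is of LSOI.  If
   [w1 <> w2] the [2^n] leaves are pairwise distinct, which no linear bound
   can absorb.  The construction is a simple manipulation of the Goedel codes
   of [M1] and [M2], expressed as a mu-recursive term. *)

From mathcomp Require Import all_boot zify.
Set Implicit Arguments. Unset Strict Implicit. Unset Printing Implicit Defensive.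

Notation Node := (@GenTree.Node void).

(** * The construction *)

Fixpoint shift_states K r :=
  match r with
  | RSym d a => RSym d (map (shift_states K) a)
  | RPar j => RPar j
  | RCall q i a => RCall (q + K) i (map (shift_states K) a)
  end.

(* The input alphabet of [equiv_test_mtt M1 M2] extends Sigma (of size [k]) *)
(* by [k] (binary), [k.+1] (unary) and [k.+2] (nullary); the output        *)
(* alphabet extends Delta (of size [dl]) by [dl] (nullary), [dl.+1] and     *)
(* [dl.+2] (binary).  State 0 is initial, state 1 (of rank 3) unfolds the    *)
(* chain of unary symbols, and the states of [M1] and [M2] follow, shifted   *)
(* by 2 and [K2] respectively.                                               *)
Definition leaf_rhs dl := RSym dl [::].

Definition root_rhs dl K2 := RCall 1 1 [:: RCall 2 0 [::]; RCall K2 0 [::]; leaf_rhs dl].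

Definition branch_rhs dl :=
  RSym dl.+2 [:: RCall 1 0 [:: RPar 0; RPar 1; RSym dl.+1 [:: RPar 2; RPar 0]];
                 RCall 1 0 [:: RPar 0; RPar 1; RSym dl.+1 [:: RPar 2; RPar 1]]].

Definition nullary_sym (S : seq nat) := find (pred1 0) S.

(* A state of [M1] or [M2] reads each new input symbol as the nullary *)
(* symbol [c] of Sigma; it only ever meets them below the root.        *)
Definition copy_row dl c K (row : seq rhs) :=
  map (shift_states K) (row ++ nseq 3 (nth (leaf_rhs dl) row c)).

(* Without a nullary symbol in Sigma there are no input trees, and the copies *)
(* of [M1] and [M2] would not be well formed: the root rule then degenerates. *)
Definition root_row k dl K2 c :=
  nseq k (leaf_rhs dl) ++
  [:: if c < k then root_rhs dl K2 else leaf_rhs dl; leaf_rhs dl; leaf_rhs dl].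

Definition branch_row k dl := nseq k (RPar 2) ++ [:: RPar 2; branch_rhs dl; RPar 2].

Definition equiv_test_mtt (M1 M2 : mtt) : mtt :=
  let S := in_ranks M1 in let D := out_ranks M1 in
  let k := size S in let dl := size D in
  let K2 := 2 + size (st_ranks M1) in let c := nullary_sym S in
  Mtt (S ++ [:: 2; 1; 0]) (D ++ [:: 0; 2; 2]) (0 :: 3 :: st_ranks M1 ++ st_ranks M2)
    (root_row k dl K2 c :: branch_row k dl ::
       map (copy_row dl c 2) (rules M1) ++ map (copy_row dl c K2) (rules M2)).

Lemma tree_ind_In (P : tree -> Prop) :
  (forall v, P (GenTree.Leaf v)) ->
  (forall a ts, (forall t, List.In t ts -> P t) -> P (Node a ts)) -> forall t, P t.
Proof.
move=> HL HN; fix IH 1 => -[v|a ts]; first exact: HL.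
apply: HN; elim: ts => [|t ts IHts] u /=; [case | case=> [<-|Hu]; [exact: IH|exact: IHts]].
Qed.

Lemma rhs_ind_In (P : rhs -> Prop) :
  (forall d a, (forall x, List.In x a -> P x) -> P (RSym d a)) ->
  (forall j, P (RPar j)) ->
  (forall q i a, (forall x, List.In x a -> P x) -> P (RCall q i a)) -> forall r, P r.
Proof.
move=> HS HP HC; fix IH 1 => -[d a|j|q i a]; [apply: HS| exact: HP| apply: HC];
  (elim: a => [|x a IHa] y /=; [case | case=> [<-|Hy]; [exact: IH | exact: IHa]]).
Qed.

Lemma all_In (T : Type) (p : pred T) l : all p l <-> (forall x, List.In x l -> p x).
Proof.
elim: l => [|y l IH] /=; first by [].
split=> [/andP [py /IH pl] x [<-|/pl] //|H].
by rewrite H ?IH; [move=> x Hx; apply: H; right | left].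
Qed.

Lemma all_map_In (T U : Type) (f : T -> U) (p : pred U) l :
  (forall x, List.In x l -> p (f x)) -> all p (map f l).
Proof. by move=> H; apply/all_In => x /List.in_map_iff [y [<- /H]]. Qed.

Lemma eq_map_In (T U : Type) (f g : T -> U) l :
  (forall x, List.In x l -> f x = g x) -> map f l = map g l.
Proof. by elim: l => //= x l IH H; rewrite H ?IH //; [move=> y Hy; apply: H; right | left]. Qed.

Lemma mem_nth_In (T : Type) (x0 : T) l i : i < size l -> List.In (nth x0 l i) l.
Proof. by elim: l i => [|x l IH] [|i] //= H; [left | right; apply: IH]. Qed.

Lemma nth_map_dflt (T U : Type) (f : T -> U) x0 s i : nth (f x0) (map f s) i = f (nth x0 s i).
Proof. by elim: s i => [|x s IH] [|i] //=. Qed.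

Lemma wf_tree_node r a ts :
  wf_tree r (Node a ts) = [&& a < size r, size ts == nth 0 r a & all (wf_tree r) ts].
Proof. by rewrite /=; congr [&& _, _ & _]; elim: ts => //= t ts ->. Qed.

Lemma tsize_node a ts : tsize (Node a ts) = sumn (map tsize ts) + 1.
Proof. by rewrite /=; congr (_ + _); elim: ts => //= t ts ->. Qed.

Lemma subtrees_node a ts : subtrees (Node a ts) = Node a ts :: flatten (map subtrees ts).
Proof. by rewrite /=; congr (_ :: _); elim: ts => //= t ts ->. Qed.

Lemma wf_rhs_sym M m k d a : wf_rhs M m k (RSym d a) =
  [&& d < size (out_ranks M), size a == nth 0 (out_ranks M) d & all (wf_rhs M m k) a].
Proof. by rewrite /=; congr [&& _, _ & _]; elim: a => //= t ts ->. Qed.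

Lemma wf_rhs_call M m k q i a : wf_rhs M m k (RCall q i a) =
  [&& q < size (st_ranks M), i < k, size a == nth 0 (st_ranks M) q & all (wf_rhs M m k) a].
Proof. by rewrite /=; congr [&& _, _, _ & _]; elim: a => //= t ts ->. Qed.

Lemma inst_sym d a ys fs : inst (RSym d a) ys fs = Node d (map (fun c => inst c ys fs) a).
Proof. by rewrite /=; congr (Node d _); elim: a => //= t ts ->. Qed.

Lemma inst_call q i a ys fs :
  inst (RCall q i a) ys fs = nth (fun _ _ => dtree) fs i q (map (fun c => inst c ys fs) a).
Proof. by rewrite /=; congr (nth _ fs i q _); elim: a => //= t ts ->. Qed.

Lemma msem_node M a ss q ys : msem M (Node a ss) q ys = inst (rule M q a) ys (map (msem M) ss).
Proof. by rewrite /=; congr (inst _ ys _); elim: ss => //= t ts ->. Qed.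

Lemma wf_shift_states (Mi M : mtt) K m k k' r :
  (forall d, d < size (out_ranks Mi) ->
     d < size (out_ranks M) /\ nth 0 (out_ranks M) d = nth 0 (out_ranks Mi) d) ->
  (forall q, q < size (st_ranks Mi) ->
     q + K < size (st_ranks M) /\ nth 0 (st_ranks M) (q + K) = nth 0 (st_ranks Mi) q) ->
  k <= k' -> wf_rhs Mi m k r -> wf_rhs M m k' (shift_states K r).
Proof.
move=> HD HQ le_kk'; elim/rhs_ind_In: r => [d a IH|j|q i a IH] //.
- rewrite !wf_rhs_sym => /and3P [Hd Ha /all_In Hall].
  have [-> ->] := HD d Hd; rewrite size_map Ha /=.
  by apply: all_map_In => x Hx; apply: IH (Hall _ Hx).
- rewrite !wf_rhs_call => /and4P [Hq Hi Ha /all_In Hall].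
  have [-> ->] := HQ q Hq; rewrite size_map Ha (leq_trans Hi le_kk') /=.
  by apply: all_map_In => x Hx; apply: IH (Hall _ Hx).
Qed.

Lemma inst_shift_states (Mi : mtt) K m k r ys fs fs' :
  wf_rhs Mi m k r ->
  (forall q i ys', q < size (st_ranks Mi) -> i < k ->
     nth (fun _ _ => dtree) fs i (q + K) ys' = nth (fun _ _ => dtree) fs' i q ys') ->
  inst (shift_states K r) ys fs = inst r ys fs'.
Proof.
move=> + Hf; elim/rhs_ind_In: r => [d a IH|j|q i a IH] //.
- rewrite wf_rhs_sym !inst_sym => /and3P [_ _ /all_In H].
  by congr (Node d _); rewrite -map_comp; apply: eq_map_In => x Hx /=; apply: IH (H _ Hx).
- rewrite wf_rhs_call !inst_call => /and4P [Hq Hi _ /all_In H].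
  rewrite Hf //; congr (nth _ fs' i q _).
  by rewrite -map_comp; apply: eq_map_In => x Hx /=; apply: IH (H _ Hx).
Qed.

Lemma nth_root_row k dl K2 c a : a < k + 3 ->
  nth (RPar 0) (root_row k dl K2 c) a =
  if (a == k) && (c < k) then root_rhs dl K2 else leaf_rhs dl.
Proof.
move=> lt_a; rewrite /root_row nth_cat size_nseq nth_nseq.
case: ltnP => [lt_ak|le_ka]; first by rewrite (_ : a == k = false) //; lia.
have : a - k < 3 by lia.
case: (a - k) (subnKC le_ka) => [|[|[|]]] //= <- _; rewrite ?addn0 ?eqxx //.
all: by rewrite -[k in _ == k]addn0 eqn_add2l.
Qed.

Lemma nth_branch_row k dl a : a < k + 3 ->
  nth (RPar 0) (branch_row k dl) a = if a == k.+1 then branch_rhs dl else RPar 2.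
Proof.
move=> lt_a; rewrite /branch_row nth_cat size_nseq nth_nseq.
case: ltnP => [lt_ak|le_ka]; first by rewrite ifF //; lia.
have : a - k < 3 by lia.
case: (a - k) (subnKC le_ka) => [|[|[|]]] //= <- _; rewrite ?addn0 ?addn1 ?eqxx //.
all: by rewrite ifF //; lia.
Qed.

Lemma nth_copy_row dl c K row a : a < size row + 3 ->
  nth (RPar 0) (copy_row dl c K row) a =
  shift_states K (if a < size row then nth (RPar 0) row a else nth (leaf_rhs dl) row c).
Proof.
move=> lt_a; rewrite /copy_row -[RPar 0]/(shift_states K (RPar 0)) nth_map_dflt nth_cat.
by case: ltnP => // le_a; rewrite nth_nseq ifT //; lia.
Qed.

Lemma size_copy_row dl c K row : size (copy_row dl c K row) = size row + 3.
Proof. by rewrite /copy_row size_map size_cat size_nseq. Qed.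

(** * Counting distinct subtrees *)

Lemma mem_subtrees_self (t : tree) : t \in subtrees t.
Proof. by case: t => [v|a ts]; rewrite ?subtrees_node inE // eqxx. Qed.

Lemma size_undup_cat (T : eqType) (s1 s2 : seq T) :
  size (undup (s1 ++ s2)) <= size s1 + size (undup s2).
Proof. by elim: s1 => //= x s1 IH; case: ifP => _ /=; lia. Qed.

Lemma nsub_leq_subset t s : {subset subtrees t <= s} -> nsub t <= size (undup s).
Proof.
move=> sub_ts; apply: uniq_leq_size; first exact: undup_uniq.
by move=> y; rewrite !mem_undup; apply: sub_ts.
Qed.

Lemma leq_nsub t s : uniq s -> {subset s <= subtrees t} -> size s <= nsub t.
Proof. by move=> uniq_s sub_st; apply: uniq_leq_size => // y /sub_st; rewrite mem_undup. Qed.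

(* [branch_tree A dl (A^n(_)) y1 y2 z] is the full binary tree of depth [n] *)
(* with inner nodes [dl.+2] whose leaves are all the left combs            *)
(* [dl.+1(...dl.+1(z, w_1)..., w_n)] with each [w_i] in [{y1, y2}].        *)
Fixpoint branch_tree (A dl : nat) (u : tree) (y1 y2 z : tree) : tree :=
  match u with
  | GenTree.Node a [:: u'] =>
      if a == A then Node dl.+2 [:: branch_tree A dl u' y1 y2 (Node dl.+1 [:: z; y1]);
                                    branch_tree A dl u' y1 y2 (Node dl.+1 [:: z; y2])]
      else z
  | _ => z
  end.

Lemma branch_tree_node A dl u y1 y2 z : branch_tree A dl (Node A [:: u]) y1 y2 z =
  Node dl.+2 [:: branch_tree A dl u y1 y2 (Node dl.+1 [:: z; y1]);
                 branch_tree A dl u y1 y2 (Node dl.+1 [:: z; y2])].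
Proof. by rewrite /= eqxx. Qed.

Lemma branch_tree_other A dl a ts y1 y2 z : ~~ ((a == A) && (size ts == 1)) ->
  branch_tree A dl (Node a ts) y1 y2 z = z.
Proof. by case: ts => [|u [|]] //=; case: eqP. Qed.

(* When [y1 = y2 = w] both children coincide: besides the subtrees of [z] *)
(* and [w], only two new subtrees appear per level.                        *)
Fixpoint branch_spine A dl (u w z : tree) : seq tree :=
  match u with
  | GenTree.Node a [:: u'] =>
      if a == A then branch_tree A dl u w w z :: Node dl.+1 [:: z; w]
                       :: branch_spine A dl u' w (Node dl.+1 [:: z; w])
      else [::]
  | _ => [::]
  end.

Lemma branch_spine_node A dl u w z : branch_spine A dl (Node A [:: u]) w z =
  branch_tree A dl (Node A [:: u]) w w z :: Node dl.+1 [:: z; w]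
    :: branch_spine A dl u w (Node dl.+1 [:: z; w]).
Proof. by rewrite /= eqxx. Qed.

Lemma branch_spine_other A dl a ts w z : ~~ ((a == A) && (size ts == 1)) ->
  branch_spine A dl (Node a ts) w z = [::].
Proof. by case: ts => [|u [|]] //=; case: eqP. Qed.

Lemma subtrees_branch_tree A dl u w z : {subset subtrees (branch_tree A dl u w w z)
  <= branch_spine A dl u w z ++ subtrees z ++ subtrees w}.
Proof.
elim/tree_ind_In: u w z => [v|a ts IH] w z x; first by rewrite /= mem_cat => ->.
case E: ((a == A) && (size ts == 1)); last first.
  by rewrite branch_tree_other ?branch_spine_other ?E //= mem_cat => ->.
case/andP: E => /eqP -> ; case: ts IH => [|u [|]] // IH _.
rewrite branch_spine_node branch_tree_node subtrees_node [flatten _]/= cats0.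
rewrite inE mem_cat orbb => /orP [/eqP ->|]; first by rewrite mem_head.
move=> /(IH u (or_introl erefl)); rewrite subtrees_node [flatten _]/= cats0.
rewrite !(mem_cat, inE).
by case/or3P => [->|/or3P [->|->|->]|->]; rewrite ?orbT.
Qed.

Lemma size_branch_spine A dl u w z : size (branch_spine A dl u w z) <= 2 * tsize u.
Proof.
elim/tree_ind_In: u w z => [v|a ts IH] w z //.
case E: ((a == A) && (size ts == 1)); last by rewrite branch_spine_other ?E.
case/andP: E => /eqP -> ; case: ts IH => [|u [|]] // IH _.
rewrite branch_spine_node tsize_node /=.
by have := IH u (or_introl erefl) w (Node dl.+1 [:: z; w]); lia.
Qed.

Lemma nsub_branch_tree_eq A dl u w :
  nsub (branch_tree A dl u w w (Node dl [::])) <= 2 * tsize u + 1 + nsub w.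
Proof.
apply: leq_trans (nsub_leq_subset (@subtrees_branch_tree A dl u w _)) _.
apply: leq_trans (size_undup_cat _ _) _; rewrite subtrees_node [flatten _]/= -addnA.
exact: leq_add (size_branch_spine _ _ _ _ _) (size_undup_cat [:: Node dl [::]] _).
Qed.

Fixpoint branch_leaf dl (w1 w2 : tree) (bs : seq bool) (z : tree) :=
  if bs is b :: bs' then branch_leaf dl w1 w2 bs' (Node dl.+1 [:: z; if b then w1 else w2])
  else z.

Definition unary_chain A B n := iter n (fun t => Node A [:: t]) (Node B [::]).

Lemma unary_chainS A B n : unary_chain A B n.+1 = Node A [:: unary_chain A B n].
Proof. by []. Qed.

Lemma tsize_unary_chain A B n : tsize (unary_chain A B n) = n.+1.
Proof. by elim: n => // n IH; rewrite unary_chainS tsize_node /= IH; lia. Qed.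

Lemma mem_branch_leaf A B dl w1 w2 n bs z : B != A -> size bs = n ->
  branch_leaf dl w1 w2 bs z \in subtrees (branch_tree A dl (unary_chain A B n) w1 w2 z).
Proof.
move=> neq_BA; elim: n bs z => [|n IH] [|b bs] z //= => [_|[size_bs]].
  exact: mem_subtrees_self.
rewrite eqxx subtrees_node inE; apply/orP; right.
by case: b; rewrite /= ?mem_cat IH ?orbT.
Qed.

Lemma branch_leaf_inj dl w1 w2 bs bs' z z' : w1 != w2 -> size bs = size bs' ->
  branch_leaf dl w1 w2 bs z = branch_leaf dl w1 w2 bs' z' -> bs = bs' /\ z = z'.
Proof.
move=> neq_w; elim: bs bs' z z' => [|b bs IH] [|b' bs'] z z' //= [size_bs] /IH.
case=> // -> [-> eq_b]; split=> //; congr cons.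
by case: b b' eq_b => [] [] // eq_w; rewrite eq_w eqxx in neq_w.
Qed.

Lemma nsub_branch_tree_neq A B dl w1 w2 n z : B != A -> w1 != w2 ->
  2 ^ n <= nsub (branch_tree A dl (unary_chain A B n) w1 w2 z).
Proof.
move=> neq_BA neq_w.
have := @leq_nsub _ [seq branch_leaf dl w1 w2 bs z | bs : n.-tuple bool].
rewrite size_map -cardE card_tuple card_bool; apply.
  rewrite map_inj_uniq ?enum_uniq // => bs bs' /branch_leaf_inj.
  by rewrite !size_tuple => /(_ neq_w erefl) [/val_inj].
by move=> _ /mapP [bs _ ->]; apply: mem_branch_leaf; rewrite ?size_tuple.
Qed.

Fixpoint restrict_input (k c : nat) (t : tree) : tree :=
  match t with
  | GenTree.Node a ts =>
      if a < k then Node a (map (restrict_input k c) ts) else Node c [::]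
  | GenTree.Leaf _ => t
  end.

Lemma restrict_input_node k c a ts : restrict_input k c (Node a ts) =
  if a < k then Node a (map (restrict_input k c) ts) else Node c [::].
Proof. by []. Qed.

Lemma tsize_restrict_input k c t : tsize (restrict_input k c t) <= tsize t.
Proof.
elim/tree_ind_In: t => [v|a ts IH] //; rewrite restrict_input_node.
case: ltnP => _; rewrite !tsize_node; last by rewrite /=; lia.
rewrite -map_comp leq_add2r; elim: ts IH => //= t ts IHts IH.
by apply: leq_add; [apply: IH; left | apply: IHts => u Hu; apply: IH; right].
Qed.

Lemma exp2_gt_linear C a : exists n, C * (a + n) < 2 ^ n.
Proof.
pose m := C * a.+2 + 1; exists (m + m).
have lt_m : m < 2 ^ m by apply: ltn_expl.
have : m * m < 2 ^ m * 2 ^ m by apply: ltn_mul.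
by rewrite -expnD; apply: leq_trans; rewrite ltnS /m; nia.
Qed.

(** * Correctness of the construction *)

Section EquivTest.
Variables M1 M2 : mtt.
Hypothesis wf_M1 : wf_mtt M1.
Hypothesis wf_M2 : wf_mtt M2.
Hypothesis same_in : in_ranks M1 = in_ranks M2.
Hypothesis same_out : out_ranks M1 = out_ranks M2.

Local Notation S := (in_ranks M1).
Local Notation D := (out_ranks M1).
Local Notation Q1 := (st_ranks M1).
Local Notation Q2 := (st_ranks M2).
Local Notation k := (size S).
Local Notation dl := (size D).
Local Notation n1 := (size Q1).
Local Notation K2 := (2 + size Q1).
Local Notation c := (nullary_sym S).
Local Notation M := (equiv_test_mtt M1 M2).

Lemma size_st_ranks_M : size (st_ranks M) = (n1 + size Q2).+2.
Proof. by rewrite /= size_cat. Qed.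

Lemma size_out_ranks_M : size (out_ranks M) = dl + 3.
Proof. by rewrite /= size_cat. Qed.

Lemma size_in_ranks_M : size (in_ranks M) = k + 3.
Proof. by rewrite /= size_cat. Qed.

Lemma st_ranks_M1 q : q < n1 ->
  q + 2 < size (st_ranks M) /\ nth 0 (st_ranks M) (q + 2) = nth 0 Q1 q.
Proof. by move=> lt_q; rewrite /= size_cat addn2 /= nth_cat lt_q; split=> //; lia. Qed.

Lemma st_ranks_M2 q : q < size Q2 ->
  q + K2 < size (st_ranks M) /\ nth 0 (st_ranks M) (q + K2) = nth 0 Q2 q.
Proof.
move=> lt_q; have -> : q + K2 = (q + n1).+2 by lia.
by rewrite /= size_cat nth_cat ifF ?addnK; [split=> //; lia | lia].
Qed.

Lemma out_ranks_M d : d < dl -> d < size (out_ranks M) /\ nth 0 (out_ranks M) d = nth 0 D d.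
Proof. by move=> lt_d; rewrite /= size_cat nth_cat lt_d; split=> //; lia. Qed.

Lemma out_ranks_M_new j : nth 0 (out_ranks M) (dl + j) = nth 0 [:: 0; 2; 2] j.
Proof. by rewrite /= nth_cat ifF ?addKn //; lia. Qed.

Lemma in_ranks_M_old a : a < k -> nth 0 (in_ranks M) a = nth 0 S a.
Proof. by move=> lt_a; rewrite /= nth_cat lt_a. Qed.

Lemma in_ranks_M_new a : k <= a -> nth 0 (in_ranks M) a = nth 0 [:: 2; 1; 0] (a - k).
Proof. by move=> le_a; rewrite /= nth_cat ltnNge le_a. Qed.

Lemma rules_M1 q : q < n1 -> nth [::] (rules M) (q + 2) = copy_row dl c 2 (nth [::] (rules M1) q).
Proof.
case: wf_M1 => _ _ size_R1 _ _ lt_q.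
by rewrite addn2 /= nth_cat size_map size_R1 lt_q (nth_map [::]) ?size_R1.
Qed.

Lemma rules_M2 q : q < size Q2 ->
  nth [::] (rules M) (q + K2) = copy_row dl c K2 (nth [::] (rules M2) q).
Proof.
case: wf_M1 wf_M2 => _ _ size_R1 _ _ [_ _ size_R2 _ _] lt_q.
have -> : q + K2 = (q + n1).+2 by lia.
rewrite /= nth_cat size_map size_R1 ifF; last lia.
by rewrite addnK (nth_map [::]) ?size_R2.
Qed.

Lemma states_M q : q < size (st_ranks M) ->
  [\/ q = 0, q = 1, exists2 q', q' < n1 & q = q' + 2 | exists2 q', q' < size Q2 & q = q' + K2].
Proof.
rewrite size_st_ranks_M; case: q => [|[|q]] lt_q; [exact: Or41 | exact: Or42 |].
by case: (ltnP q n1) => H; [apply: Or43; exists q | apply: Or44; exists (q - n1)]; lia.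
Qed.

Lemma wf_leaf_rhs m k' : wf_rhs M m k' (leaf_rhs dl).
Proof.
rewrite wf_rhs_sym size_out_ranks_M -[dl]addn0 out_ranks_M_new /=.
by apply/andP; split=> //; lia.
Qed.

Lemma nullary_symP : c < k -> nth 0 S c = 0.
Proof. by move=> lt_c; apply/eqP; apply: (@nth_find _ 0 (pred1 0)); rewrite has_find. Qed.

Lemma wf_copy_row (Mi : mtt) K q a :
  wf_mtt Mi -> in_ranks Mi = S -> out_ranks Mi = D ->
  (forall q, q < size (st_ranks Mi) ->
     q + K < size (st_ranks M) /\ nth 0 (st_ranks M) (q + K) = nth 0 (st_ranks Mi) q) ->
  q < size (st_ranks Mi) -> a < k + 3 ->
  wf_rhs M (nth 0 (st_ranks Mi) q) (nth 0 (in_ranks M) a)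
    (nth (RPar 0) (copy_row dl c K (nth [::] (rules Mi) q)) a).
Proof.
move=> [_ _ _ size_row wf_rules] in_Mi out_Mi HQ lt_q lt_a.
have HD d : d < size (out_ranks Mi) ->
    d < size (out_ranks M) /\ nth 0 (out_ranks M) d = nth 0 (out_ranks Mi) d.
  by rewrite out_Mi; apply: out_ranks_M.
have size_q : size (nth [::] (rules Mi) q) = k by rewrite size_row // in_Mi.
rewrite nth_copy_row size_q //; case: ltnP => [lt_ak|_].
  apply: (wf_shift_states HD HQ) (wf_rules _ _ lt_q _); last by rewrite in_Mi.
  by rewrite in_ranks_M_old // in_Mi.
case: (ltnP c k) => [lt_ck|le_kc]; last first.
  by rewrite (nth_default (leaf_rhs dl)) ?size_q //; apply: wf_leaf_rhs.
rewrite (set_nth_default (RPar 0)) ?size_q //.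
apply: (wf_shift_states (k := 0) HD HQ) => //.
by move: (wf_rules q c lt_q); rewrite in_Mi nullary_symP // => /(_ lt_ck).
Qed.

Lemma wf_root_rhs : c < k -> wf_rhs M 0 (nth 0 (in_ranks M) k) (root_rhs dl K2).
Proof.
case: wf_M1 wf_M2 => n1_gt0 Q10 _ _ _ [n2_gt0 Q20 _ _ _] lt_ck.
rewrite in_ranks_M_new // subnn /root_rhs wf_rhs_call size_st_ranks_M /=.
have Q0 : nth 0 (Q1 ++ Q2) 0 = 0 by rewrite nth_cat n1_gt0.
have QK2 : nth 0 (Q1 ++ Q2) (0 + n1) = 0 by rewrite nth_cat ltnNge add0n leqnn subnn.
have D0 : nth 0 (D ++ [:: 0; 2; 2]) dl = 0 by rewrite nth_cat ltnn subnn.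
by rewrite !size_cat Q0 QK2 D0 /=; lia.
Qed.

Lemma wf_branch_rhs : wf_rhs M 3 (nth 0 (in_ranks M) k.+1) (branch_rhs dl).
Proof.
rewrite in_ranks_M_new ?subSnn // /branch_rhs wf_rhs_sym size_out_ranks_M.
have E2 : nth 0 (out_ranks M) dl.+2 = 2 by rewrite -addn2 out_ranks_M_new.
have /= E1 : nth 0 (out_ranks M) dl.+1 = 2 by rewrite -addn1 out_ranks_M_new.
by rewrite E2 /= !size_cat E1 /=; lia.
Qed.

Lemma wf_equiv_test_mtt : wf_mtt M.
Proof.
case: (wf_M1) => _ _ size_R1 size_row1 _; case: (wf_M2) => _ _ size_R2 size_row2 _.
split=> //.
- by rewrite /= size_cat !size_map size_R1 size_R2 size_cat.
- move=> q /states_M [->|->|[q' lt_q ->]|[q' lt_q ->]]; rewrite size_in_ranks_M.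
  + by rewrite /= /root_row size_cat size_nseq.
  + by rewrite /= /branch_row size_cat size_nseq.
  + by rewrite rules_M1 // size_copy_row size_row1.
  + by rewrite rules_M2 // size_copy_row size_row2 // -same_in.
- move=> q a /states_M Hq; rewrite size_in_ranks_M /rule => lt_a.
  case: Hq => [->|->|[q' lt_q ->]|[q' lt_q ->]].
  + rewrite nth_root_row //; case: ifP => [/andP [/eqP -> ?]|_]; last exact: wf_leaf_rhs.
    exact: wf_root_rhs.
  + rewrite /= nth_branch_row //; case: eqP => [->|_]; [exact: wf_branch_rhs | by []].
  + have [_ ->] := st_ranks_M1 lt_q; rewrite rules_M1 //.
    exact: wf_copy_row wf_M1 erefl erefl st_ranks_M1 lt_q lt_a.
  + have [_ ->] := st_ranks_M2 lt_q; rewrite rules_M2 //.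
    exact: wf_copy_row wf_M2 (esym same_in) (esym same_out) st_ranks_M2 lt_q lt_a.
Qed.

Lemma wf_tree_M_node a ts : wf_tree (in_ranks M) (Node a ts) ->
  [/\ a < k + 3, size ts = nth 0 (in_ranks M) a &
      forall t, List.In t ts -> wf_tree (in_ranks M) t].
Proof.
by rewrite wf_tree_node size_in_ranks_M => /and3P [lt_a /eqP size_ts /all_In].
Qed.

Lemma msem_copy (Mi : mtt) K : wf_mtt Mi -> in_ranks Mi = S ->
  (forall q, q < size (st_ranks Mi) ->
     nth [::] (rules M) (q + K) = copy_row dl c K (nth [::] (rules Mi) q)) ->
  c < k -> forall s q ys, wf_tree (in_ranks M) s -> q < size (st_ranks Mi) ->
  msem M s (q + K) ys = msem Mi (restrict_input k c s) q ys.
Proof.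
move=> [_ _ _ size_row wf_rules] in_Mi rules_Mi lt_ck.
elim/tree_ind_In => [[]|a ts IH] q ys /wf_tree_M_node [lt_a size_ts wf_ts] lt_q.
have size_q : size (nth [::] (rules Mi) q) = k by rewrite size_row // in_Mi.
rewrite msem_node /rule rules_Mi // nth_copy_row size_q // restrict_input_node.
case: ltnP => [lt_ak|_]; rewrite msem_node.
  apply: (inst_shift_states ys (wf_rules q a lt_q _)); first by rewrite in_Mi.
  move=> q' i ys' lt_q' lt_i.
  have lt_its : i < size ts by rewrite size_ts in_ranks_M_old // -in_Mi.
  by rewrite -map_comp !(nth_map dtree) //= IH //; [apply: mem_nth_In | apply/wf_ts/mem_nth_In].
rewrite (set_nth_default (RPar 0)) ?size_q //.
apply: (inst_shift_states ys (wf_rules q c lt_q _)); first by rewrite in_Mi.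
by move=> q' i ys' _; rewrite in_Mi nullary_symP.
Qed.

Lemma msem_branch u y1 y2 z : wf_tree (in_ranks M) u ->
  msem M u 1 [:: y1; y2; z] = branch_tree k.+1 dl u y1 y2 z.
Proof.
elim/tree_ind_In: u y1 y2 z => [[]|a ts IH] y1 y2 z /wf_tree_M_node [lt_a size_ts wf_ts].
rewrite msem_node /rule /= nth_branch_row //; case: eqP => [eq_a|neq_a]; last first.
  by case: ts {IH wf_ts size_ts} => [|u [|]] //=; case: eqP.
move: size_ts; rewrite eq_a in_ranks_M_new ?subSnn //.
case: ts IH wf_ts => [|u [|]] // IH wf_ts _.
have wf_u : wf_tree (in_ranks M) u by apply: wf_ts; left.
by rewrite /= !(IH u (or_introl erefl)).
Qed.

Lemma mrun_root t u : c < k -> wf_tree (in_ranks M) (Node k [:: t; u]) ->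
  mrun M (Node k [:: t; u]) =
  branch_tree k.+1 dl u (mrun M1 (restrict_input k c t)) (mrun M2 (restrict_input k c t))
    (Node dl [::]).
Proof.
case: (wf_M1) (wf_M2) => n1_gt0 _ _ _ _ [n2_gt0 _ _ _ _] lt_ck /wf_tree_M_node [_ _ wf_tu].
have wf_t : wf_tree (in_ranks M) t by apply: wf_tu; left.
have wf_u : wf_tree (in_ranks M) u by apply: wf_tu; right; left.
rewrite /mrun msem_node /rule /= nth_root_row ?eqxx ?lt_ck; last lia.
rewrite /= msem_branch // -[2]/(0 + 2) -[K2]/(0 + K2).
by rewrite (msem_copy wf_M1 erefl rules_M1) // (msem_copy wf_M2 (esym same_in) rules_M2).
Qed.

Lemma mrun_nonroot a ts : wf_tree (in_ranks M) (Node a ts) -> ~~ ((a == k) && (c < k)) ->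
  mrun M (Node a ts) = Node dl [::].
Proof.
move=> /wf_tree_M_node [lt_a _ _] /negbTE not_root.
by rewrite /mrun msem_node /rule /= nth_root_row // not_root.
Qed.

Lemma wf_restrict_input t : c < k -> wf_tree (in_ranks M) t -> wf_tree S (restrict_input k c t).
Proof.
move=> lt_ck; elim/tree_ind_In: t => [[]|a ts IH] /wf_tree_M_node [lt_a size_ts wf_ts].
rewrite restrict_input_node; case: ltnP => [lt_ak|_]; rewrite wf_tree_node; last first.
  by rewrite lt_ck nullary_symP.
rewrite lt_ak size_map size_ts in_ranks_M_old // eqxx /=.
by apply: all_map_In => u Hu; apply: IH => //; apply: wf_ts.
Qed.

Lemma restrict_input_id t : wf_tree S t -> restrict_input k c t = t.
Proof.
elim/tree_ind_In: t => [[]|a ts IH]; rewrite wf_tree_node => /and3P [lt_a _ /all_In wf_ts].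
rewrite restrict_input_node lt_a; congr (Node a _).
by rewrite -[RHS]map_id; apply: eq_map_In => u Hu; apply: IH => //; apply: wf_ts.
Qed.

Lemma wf_tree_M_old t : wf_tree S t -> wf_tree (in_ranks M) t.
Proof.
elim/tree_ind_In: t => [[]|a ts IH]; rewrite !wf_tree_node => /and3P [lt_a size_ts /all_In wf_ts].
rewrite in_ranks_M_old // size_ts size_in_ranks_M ltn_addr //=.
by apply/all_In => u Hu; apply: IH => //; apply: wf_ts.
Qed.

Lemma wf_unary_chain n : wf_tree (in_ranks M) (unary_chain k.+1 k.+2 n).
Proof.
elim: n => [|n IH].
  rewrite [unary_chain _ _ 0]/= wf_tree_node size_in_ranks_M in_ranks_M_new ?leqW //.
  by rewrite (_ : k.+2 - k = 2) /=; lia.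
rewrite unary_chainS wf_tree_node size_in_ranks_M.
by rewrite in_ranks_M_new // subSnn /= IH; lia.
Qed.

(* A well-formed input tree has a leaf, so Sigma has a nullary symbol. *)
Lemma nullary_sym_lt t : wf_tree S t -> c < k.
Proof.
elim/tree_ind_In: t => [[]|a ts IH].
rewrite wf_tree_node => /and3P [lt_a /eqP size_ts /all_In wf_ts].
case: ts IH size_ts wf_ts => [|t ts] IH size_ts wf_ts.
  rewrite /nullary_sym -has_find; apply/hasP.
  by exists (nth 0 S a); [apply: mem_nth | rewrite /= -size_ts].
by apply: (IH t); [left | apply: wf_ts; left].
Qed.

Lemma LSOI_equiv_test : LSOI M1 -> mtt_equiv M1 M2 -> LSOI M.
Proof.
move=> [C1 lsoi1] eq12; exists (C1 + 3) => -[[]|a ts] wf_s.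
case E: ((a == k) && (c < k)); last first.
  by rewrite mrun_nonroot ?E // tsize_node /nsub subtrees_node /=; lia.
case/andP: E => /eqP eq_a lt_ck; subst a.
have [_ size_ts wf_ts] := wf_tree_M_node wf_s.
move: size_ts; rewrite in_ranks_M_new // subnn.
case: ts wf_s wf_ts => [|t [|u []]] // wf_s wf_ts _.
have wf_rt := wf_restrict_input lt_ck (wf_ts t (or_introl erefl)).
rewrite mrun_root // -(eq12 _ wf_rt); apply: leq_trans (nsub_branch_tree_eq _ _ _ _) _.
have := leq_trans (lsoi1 _ wf_rt) (leq_mul (leqnn C1) (tsize_restrict_input k c t)).
by rewrite tsize_node /=; nia.
Qed.

Lemma equiv_of_LSOI_equiv_test : LSOI M -> mtt_equiv M1 M2.
Proof.
move=> [C lsoi] t wf_t; case: (eqVneq (mrun M1 t) (mrun M2 t)) => // neq_run; exfalso.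
have lt_ck := nullary_sym_lt wf_t.
have [n lt_n] := exp2_gt_linear C (tsize t).+2.
pose s := Node k [:: t; unary_chain k.+1 k.+2 n].
have wf_s : wf_tree (in_ranks M) s.
  rewrite wf_tree_node size_in_ranks_M in_ranks_M_new // subnn /=.
  by rewrite wf_tree_M_old // wf_unary_chain; lia.
have := lsoi s wf_s; rewrite mrun_root // restrict_input_id // tsize_node /= tsize_unary_chain.
have neq_BA : k.+2 != k.+1 by rewrite eqSS neq_ltn ltnSn orbT.
move/(leq_trans (@nsub_branch_tree_neq k.+1 k.+2 dl _ _ n (Node dl [::]) neq_BA neq_run)).
have -> : tsize t + (n.+1 + 0) + 1 = (tsize t).+2 + n by lia.
by rewrite leqNgt lt_n.
Qed.
End EquivTest.

(** * Computable functions *)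

Definition computes n (P : murec) (f : seq nat -> nat) :=
  forall v, size v = n -> mueval P v (f v).

Definition computable n (f : seq nat -> nat) := exists P, computes n P f.

Definition computable1 (f : nat -> nat) := computable 1 (fun v => f (nth 0 v 0)).
Definition computable2 (f : nat -> nat -> nat) :=
  computable 2 (fun v => f (nth 0 v 0) (nth 0 v 1)).
Definition computable3 (f : nat -> nat -> nat -> nat) :=
  computable 3 (fun v => f (nth 0 v 0) (nth 0 v 1) (nth 0 v 2)).

Lemma computable_ext n f g :
  computable n f -> (forall v, size v = n -> f v = g v) -> computable n g.
Proof. by move=> [P HP] fg; exists P => v Hv; rewrite -fg //; apply: HP. Qed.

Lemma computable_proj n i : i < n -> computable n (fun v => nth 0 v i).
Proof. by move=> ltin; exists (mProj i) => v Hv; apply: ev_proj; rewrite Hv. Qed.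

Lemma computable_head n : 0 < n -> computable n (head 0).
Proof. by move=> n_gt0; apply: computable_ext (computable_proj n_gt0) _ => -[]. Qed.

Lemma computable_nth_behead n i : i.+1 < n -> computable n (fun v => nth 0 (behead v) i).
Proof.
by move=> lt_in; apply: computable_ext (computable_proj lt_in) _ => v _; rewrite nth_behead.
Qed.

Lemma computable_succ : computable1 S.
Proof. by exists mSucc => -[|x []] //= _; apply: ev_succ. Qed.

Lemma computable_compose n m f (Fs : seq (seq nat -> nat)) :
  computable m f -> (forall F, List.In F Fs -> computable n F) ->
  size Fs = m -> computable n (fun v => f (map (fun F => F v) Fs)).
Proof.
move=> [P HP] HFs sizeFs.
have [gs Hgs] : exists gs, forall v, size v = n -> mueval_list gs v (map (fun F => F v) Fs).
  elim: Fs HFs {sizeFs} => [|F Fs IH] HFs; first by exists [::] => v _; apply: evl_nil.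
  have [G HG] := HFs F (or_introl erefl).
  have [gs Hgs] := IH (fun G HG => HFs G (or_intror HG)).
  by exists (G :: gs) => v Hv /=; apply: evl_cons; [apply: HG | apply: Hgs].
exists (mComp P gs) => v Hv; apply: ev_comp; first exact: Hgs.
by apply: HP; rewrite size_map.
Qed.

Lemma computable_app1 f n g : computable1 f -> computable n g -> computable n (fun v => f (g v)).
Proof.
move=> Hf Hg; apply: (computable_compose (Fs := [:: g]) Hf) => //.
by move=> F [<-|[]].
Qed.

Lemma computable_app2 f n g1 g2 : computable2 f -> computable n g1 -> computable n g2 ->
  computable n (fun v => f (g1 v) (g2 v)).
Proof.
move=> Hf H1 H2; apply: (computable_compose (Fs := [:: g1; g2]) Hf) => //.
by move=> F [<-|[<-|[]]].
Qed.

Lemma computable_app3 f n g1 g2 g3 : computable3 f ->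
  computable n g1 -> computable n g2 -> computable n g3 ->
  computable n (fun v => f (g1 v) (g2 v) (g3 v)).
Proof.
move=> Hf H1 H2 H3; apply: (computable_compose (Fs := [:: g1; g2; g3]) Hf) => //.
by move=> F [<-|[<-|[<-|[]]]].
Qed.

Lemma computable_const n c : computable n (fun=> c).
Proof.
elim: c => [|c IH]; first by exists mZero => v _; apply: ev_zero.
exact: computable_app1 computable_succ IH.
Qed.

Fixpoint primrec (f g : seq nat -> nat) x (w : seq nat) :=
  if x is x'.+1 then g (x' :: primrec f g x' w :: w) else f w.

Lemma computable_primrec n f g : computable n f -> computable n.+2 g ->
  computable n.+1 (fun v => primrec f g (head 0 v) (behead v)).
Proof.
move=> [F HF] [G HG]; exists (mPrim F G) => -[|x w] //= [Hw].
elim: x => [|x IH] /=; first by apply: ev_prim0; apply: HF.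
by apply: ev_primS; [apply: IH | apply: HG; rewrite /= Hw].
Qed.

Lemma computable_mu n f h : computable n.+1 f ->
  (forall v, size v = n -> f (h v :: v) = 0 /\ forall m, m < h v -> f (m :: v) <> 0) ->
  computable n h.
Proof.
move=> [F HF] Hh; exists (mMu F) => v Hv; have [h0 h_min] := Hh v Hv.
apply: ev_mu => [|m lt_mh]; first by rewrite -h0; apply: HF; rewrite /= Hv.
exists (f (m :: v)).-1; rewrite prednK; last by rewrite lt0n; apply/eqP/h_min.
by apply: HF; rewrite /= Hv.
Qed.

Create HintDb computable.

(* Decomposes a goal [computable n (fun v => F (A v) ...)] along the head *)
(* function [F], whose computability is looked up in the hint database.   *)
Ltac computable_step :=
  match goal with
  | |- computable _ (fun v => nth 0 v _) => apply: computable_proj; done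
  | |- computable _ (fun v => nth 0 (behead v) _) => apply: computable_nth_behead; done
  | |- computable _ (fun v => head 0 v) => apply: computable_head; done
  | |- computable _ (head 0) => apply: computable_head; done
  | |- computable _ (fun _ => ?c) => apply: computable_const
  | |- computable _ (fun v => ?F (@?A v) (@?B v) (@?C v)) =>
      apply: (@computable_app3 F); [solve [eauto with computable] | | | ]
  | |- computable _ (fun v => ?F (@?A v) (@?B v)) =>
      apply: (@computable_app2 F); [solve [eauto with computable] | | ]
  | |- computable _ (fun v => ?F (@?A v)) =>
      apply: (@computable_app1 F); [solve [eauto with computable] | ]
  end.
Ltac solve_computable := repeat computable_step.

#[export] Hint Resolve computable_succ : computable.

Lemma computable_by_primrec n (h : seq nat -> nat) f g :
  computable n f -> computable n.+2 g ->
  (forall x w, size w = n -> primrec f g x w = h (x :: w)) -> computable n.+1 h.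
Proof.
move=> Hf Hg hE; apply: computable_ext (computable_primrec Hf Hg) _.
by move=> [|x w] //= [/hE].
Qed.

Lemma computable_addn : computable2 addn.
Proof.
apply: (@computable_by_primrec 1 _ (fun w => nth 0 w 0) (fun w => (nth 0 w 1).+1));
  try solve_computable.
by move=> x [|y []] //= _; elim: x => //= x ->.
Qed.
#[export] Hint Resolve computable_addn : computable.

Lemma computable_muln : computable2 muln.
Proof.
apply: (@computable_by_primrec 1 _ (fun=> 0) (fun w => nth 0 w 1 + nth 0 w 2));
  try solve_computable.
by move=> x [|y []] //= _; elim: x => //= x ->; rewrite mulSn addnC.
Qed.
#[export] Hint Resolve computable_muln : computable.

Lemma computable_predn : computable1 predn.
Proof.
apply: (@computable_by_primrec 0 _ (fun=> 0) (fun w => nth 0 w 0)); try solve_computable.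
by move=> [|x] [].
Qed.
#[export] Hint Resolve computable_predn : computable.

Lemma computable_subn : computable2 subn.
Proof.
have rsub : computable2 (fun y x => x - y).
  apply: (@computable_by_primrec 1 _ (fun w => nth 0 w 0) (fun w => (nth 0 w 1).-1));
    try solve_computable.
  by move=> y [|x []] //= _; elim: y => //= [|y ->]; lia.
exact: computable_app2 rsub (computable_proj (isT : 1 < 2)) (computable_proj (isT : 0 < 2)).
Qed.
#[export] Hint Resolve computable_subn : computable.

Definition odd_nat x : nat := odd x.

Lemma computable_odd : computable1 odd_nat.
Proof.
apply: (@computable_by_primrec 0 _ (fun=> 0) (fun w => 1 - nth 0 w 1)); try solve_computable.
by move=> x [] // _; elim: x => //= x ->; rewrite /odd_nat /=; case: (odd x).
Qed.
#[export] Hint Resolve computable_odd : computable.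

Lemma computable_half : computable1 half.
Proof.
apply: (@computable_by_primrec 0 _ (fun=> 0) (fun w => nth 0 w 1 + odd_nat (nth 0 w 0)));
  try solve_computable.
move=> x [] // _; elim: x => //= x ->.
by rewrite /odd_nat; case: (odd x) (odd_double_half x) => /=; lia.
Qed.
#[export] Hint Resolve computable_half : computable.

Definition sgn x := 1 - (1 - x).
Definition ifnz c a b := a * sgn c + b * (1 - sgn c).
Definition eqn_nat x y := 1 - ((x - y) + (y - x)).

Lemma ifnz0 a b : ifnz 0 a b = b. Proof. rewrite /ifnz /sgn; lia. Qed.
Lemma ifnzS c a b : ifnz c.+1 a b = a. Proof. rewrite /ifnz /sgn; lia. Qed.
Lemma ifnz_lt x y a b : ifnz (y - x) a b = if x < y then a else b.
Proof. by case: ltnP => H; [rewrite -(subnSK H) ifnzS | rewrite (eqP H) ifnz0]. Qed.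
Lemma eqn_nat_refl x : eqn_nat x x = 1. Proof. rewrite /eqn_nat; lia. Qed.
Lemma eqn_nat_neq x y : x != y -> eqn_nat x y = 0. Proof. rewrite /eqn_nat; lia. Qed.

Lemma computable_ifnz : computable3 ifnz.
Proof. rewrite /computable3 /ifnz /sgn; solve_computable. Qed.
Lemma computable_eqn_nat : computable2 eqn_nat.
Proof. rewrite /computable2 /eqn_nat; solve_computable. Qed.
Lemma computable_cpair : computable2 cpair.
Proof. rewrite /computable2 /cpair; solve_computable. Qed.
#[export] Hint Resolve computable_ifnz computable_eqn_nat computable_cpair : computable.

(** * Bounded minimization and Cantor unpairing *)

Definition bmin (f : nat -> nat) (b : nat) := find (fun i => f i == 0) (iota 0 b).

Lemma bmin_before f b m : m < bmin f b -> f m <> 0.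
Proof.
move=> lt_m /eqP fm0.
have lt_mb : m < b.
  by apply: leq_trans lt_m (leq_trans (find_size _ _) _); rewrite size_iota.
by have := before_find 0 lt_m; rewrite nth_iota // add0n fm0.
Qed.

Lemma bmin_zero f b : f b = 0 -> f (bmin f b) = 0.
Proof.
move=> fb0; rewrite /bmin.
case Hh: (has (fun i => f i == 0) (iota 0 b)).
  have := nth_find 0 Hh; move: Hh; rewrite has_find size_iota => lt_b.
  by rewrite nth_iota // add0n => /eqP.
by move/negbT: Hh => /hasNfind ->; rewrite size_iota.
Qed.

Lemma bmin_eq f b m : m <= b -> f m = 0 -> (forall i, i < m -> f i <> 0) -> bmin f b = m.
Proof.
move=> le_mb fm0 fi_neq0.
have : f (bmin f b) = 0.
  case: (ltnP m b) => lt_mb; last by apply: bmin_zero; have -> : b = m by lia.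
  have Hh : has (fun i => f i == 0) (iota 0 b).
    by apply/hasP; exists m; [rewrite mem_iota | apply/eqP].
  have := nth_find 0 Hh; move: Hh; rewrite has_find size_iota => lt_b.
  by rewrite /bmin nth_iota // add0n => /eqP.
by case: (ltngtP (bmin f b) m) => // [/fi_neq0|/bmin_before].
Qed.

Lemma computable_bmin n (F : nat -> seq nat -> nat) (B : seq nat -> nat) :
  computable n.+1 (fun v => F (head 0 v) (behead v)) ->
  (forall v, size v = n -> F (B v) v = 0) ->
  computable n (fun v => bmin (fun i => F i v) (B v)).
Proof.
move=> HF HB; apply: (computable_mu HF) => v /HB FB0.
by split; [apply: (bmin_zero (f := F^~ v)) | apply: (bmin_before (f := F^~ v))].
Qed.

(* [cpair x y = tri (x + y) + y]; the sum [x + y] is recovered as the *)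
(* unique [s] with [tri s <= cpair x y < tri s.+1].                      *)
Definition tri m := (m * m.+1)./2.

Lemma triS s : tri s.+1 = tri s + s.+1.
Proof.
rewrite /tri.
have -> : s.+1 * s.+2 = s * s.+1 + (s.+1).*2 by rewrite -muln2; lia.
by rewrite halfD odd_double andbF add0n doubleK.
Qed.

Lemma leq_tri s : s <= tri s.
Proof. by elim: s => // s IH; rewrite triS; lia. Qed.

Lemma leq_tri_mono a b : a <= b -> tri a <= tri b.
Proof. by move/subnKC <-; elim: (b - a) => [|k IH]; rewrite ?addn0 // addnS triS; lia. Qed.

Lemma computable_tri : computable1 tri.
Proof. rewrite /computable1 /tri; solve_computable. Qed.
#[export] Hint Resolve computable_tri : computable.

Definition unpair_sum n := bmin (fun s => n.+1 - tri s.+1) n.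
Definition unpair2 n := n - tri (unpair_sum n).
Definition unpair1 n := unpair_sum n - unpair2 n.

Lemma unpair_sumE x y : unpair_sum (cpair x y) = x + y.
Proof.
apply: bmin_eq; rewrite /cpair -/(tri (x + y)) ?triS; first (have := leq_tri (x + y); lia).
  lia.
move=> i lt_i; have := leq_tri_mono lt_i; rewrite triS; lia.
Qed.

Lemma unpair2E x y : unpair2 (cpair x y) = y.
Proof. by rewrite /unpair2 unpair_sumE /cpair -/(tri (x + y)) addKn. Qed.

Lemma unpair1E x y : unpair1 (cpair x y) = x.
Proof. by rewrite /unpair1 unpair2E unpair_sumE addnK. Qed.

Lemma leq_cpairl x y : x <= cpair x y.
Proof. by rewrite /cpair -/(tri (x + y)); have := leq_tri (x + y); lia. Qed.

Lemma leq_cpairr x y : y <= cpair x y.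
Proof. exact: leq_addl. Qed.

Lemma computable_unpair_sum : computable1 unpair_sum.
Proof.
apply: (computable_bmin (F := fun s v => (nth 0 v 0).+1 - tri s.+1) (B := nth 0 ^~ 0)).
  solve_computable.
by move=> v _; have := leq_tri (nth 0 v 0).+1; lia.
Qed.
#[export] Hint Resolve computable_unpair_sum : computable.

Lemma computable_unpair2 : computable1 unpair2.
Proof. rewrite /computable1 /unpair2; solve_computable. Qed.
#[export] Hint Resolve computable_unpair2 : computable.

Lemma computable_unpair1 : computable1 unpair1.
Proof. rewrite /computable1 /unpair1; solve_computable. Qed.
#[export] Hint Resolve computable_unpair1 : computable.

(** * Codes of sequences *)

Notation enc := (enc_seq id).

Definition ccons h t := (cpair h t).+1.
Definition chead c := unpair1 c.-1.
Definition cbehead c := unpair2 c.-1.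
Definition cdrop i c := iter i cbehead c.
Definition cnth c i := chead (cdrop i c).
Definition csize c := bmin (fun i => cdrop i c) c.
Definition cfind0 c := bmin (fun i => cdrop i c * chead (cdrop i c)) c.
Definition cnth_dflt c i d := ifnz (csize c - i) (cnth c i) d.

Lemma enc_seq_map (T : Type) (e : T -> nat) l : enc_seq e l = enc (map e l).
Proof. by elim: l => //= x l ->. Qed.

Lemma enc_cons x l : enc (x :: l) = ccons x (enc l). Proof. by []. Qed.
Lemma cbehead0 : cbehead 0 = 0. Proof. exact: unpair2E 0 0. Qed.
Lemma chead_cons x t : chead (ccons x t) = x. Proof. exact: unpair1E. Qed.
Lemma cbehead_cons x t : cbehead (ccons x t) = t. Proof. exact: unpair2E. Qed.

Lemma size_leq_enc l : size l <= enc l.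
Proof. by elim: l => //= x l IH; have := leq_cpairr x (enc l); lia. Qed.

Lemma cdrop_leq i c : cdrop i c <= c - i.
Proof.
elim: i => [|i IH]; first by rewrite subn0.
by rewrite /cdrop iterS -/(cdrop i c) /cbehead /unpair2; lia.
Qed.

Lemma cdrop_enc i l : cdrop i (enc l) = enc (drop i l).
Proof.
elim: i l => [|i IH] l; first by rewrite drop0.
rewrite /cdrop iterSr -/(cdrop i (cbehead (enc l))).
by case: l => [|x l]; rewrite ?cbehead0 ?(IH [::]) // enc_cons cbehead_cons IH.
Qed.

Lemma cnth_enc l i : cnth (enc l) i = nth 0 l i.
Proof.
rewrite /cnth cdrop_enc; case: (ltnP i (size l)) => H.
  by rewrite (drop_nth 0 H) enc_cons chead_cons.
by rewrite drop_oversize // nth_default.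
Qed.

Lemma csize_enc l : csize (enc l) = size l.
Proof.
apply: bmin_eq; rewrite ?size_leq_enc ?cdrop_enc ?drop_size // => i lt_il.
by rewrite cdrop_enc (drop_nth 0 lt_il).
Qed.

Lemma cfind0_enc l : cfind0 (enc l) = find (pred1 0) l.
Proof.
apply: bmin_eq => [|| i lt_i]; rewrite ?cdrop_enc.
- exact: leq_trans (find_size _ _) (size_leq_enc l).
- case: (ltnP (find (pred1 0) l) (size l)) => H; last by rewrite drop_oversize.
  rewrite (drop_nth 0 H) enc_cons chead_cons.
  have /eqP -> : nth 0 l (find (pred1 0) l) == 0.
    by apply: (@nth_find _ 0 (pred1 0)); rewrite has_find.
  by rewrite muln0.
- have lt_il : i < size l by apply: leq_trans lt_i (find_size _ _).
  rewrite (drop_nth 0 lt_il) enc_cons chead_cons /ccons.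
  by have /= := before_find 0 lt_i; lia.
Qed.

Lemma cnth_dflt_enc l i d : cnth_dflt (enc l) i d = nth d l i.
Proof.
rewrite /cnth_dflt csize_enc cnth_enc ifnz_lt.
by case: ltnP => H; [apply: set_nth_default | rewrite nth_default].
Qed.

Lemma computable_ccons : computable2 ccons.
Proof. rewrite /computable2 /ccons; solve_computable. Qed.
Lemma computable_chead : computable1 chead.
Proof. rewrite /computable1 /chead; solve_computable. Qed.
Lemma computable_cbehead : computable1 cbehead.
Proof. rewrite /computable1 /cbehead; solve_computable. Qed.
#[export] Hint Resolve computable_ccons computable_chead computable_cbehead : computable.

Lemma computable_cdrop : computable2 cdrop.
Proof.
apply: (@computable_by_primrec 1 _ (fun w => nth 0 w 0) (fun w => cbehead (nth 0 w 1)));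
  try solve_computable.
by move=> i [|c []] //= _; elim: i => //= i ->.
Qed.
#[export] Hint Resolve computable_cdrop : computable.

Lemma computable_cnth : computable2 cnth.
Proof. rewrite /computable2 /cnth; solve_computable. Qed.
#[export] Hint Resolve computable_cnth : computable.

Lemma computable_csize : computable1 csize.
Proof.
apply: (computable_bmin (F := fun i v => cdrop i (nth 0 v 0)) (B := nth 0 ^~ 0)).
  solve_computable.
by move=> v _; have := cdrop_leq (nth 0 v 0) (nth 0 v 0); rewrite subnn leqn0 => /eqP.
Qed.
#[export] Hint Resolve computable_csize : computable.

Lemma computable_cfind0 : computable1 cfind0.
Proof.
apply: (computable_bmin (B := nth 0 ^~ 0)
  (F := fun i v => cdrop i (nth 0 v 0) * chead (cdrop i (nth 0 v 0)))).
  solve_computable.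
by move=> v _; have := cdrop_leq (nth 0 v 0) (nth 0 v 0); rewrite subnn leqn0 => /eqP ->.
Qed.
#[export] Hint Resolve computable_cfind0 : computable.

Lemma computable_cnth_dflt : computable3 cnth_dflt.
Proof. rewrite /computable3 /cnth_dflt; solve_computable. Qed.
#[export] Hint Resolve computable_cnth_dflt : computable.

(* Built from the back of [s]; [p] packs any further parameters of [e]. *)
Fixpoint cmap_cat_rec (e : nat -> nat -> nat) c n t p j :=
  if j is j'.+1 then ccons (e (cnth c (n - 1 - j')) p) (cmap_cat_rec e c n t p j') else t.
Definition cmap_cat e c t p := cmap_cat_rec e c (csize c) t p (csize c).

Lemma cmap_cat_enc e s t p : cmap_cat e (enc s) (enc t) p = enc (map (e ^~ p) s ++ t).
Proof.
rewrite /cmap_cat csize_enc.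
suff H j : j <= size s ->
    cmap_cat_rec e (enc s) (size s) (enc t) p j = enc (map (e ^~ p) (drop (size s - j) s) ++ t).
  by rewrite H // subnn drop0.
elim: j => [|j IH] le_js /=; first by rewrite subn0 drop_size.
have lt_js : size s - j.+1 < size s by lia.
rewrite IH 1?ltnW // (drop_nth 0 lt_js) cnth_enc enc_cons subnSK //.
by rewrite -subnDA add1n.
Qed.

Lemma computable_cmap_cat e : computable2 e -> computable3 (cmap_cat e).
Proof.
move=> He.
have Hrec : computable 5
    (fun v => cmap_cat_rec e (nth 0 v 1) (nth 0 v 2) (nth 0 v 3) (nth 0 v 4) (nth 0 v 0)).
  apply: (@computable_by_primrec 4 _ (fun w => nth 0 w 2)
    (fun w => ccons (e (cnth (nth 0 w 2) (nth 0 w 3 - 1 - nth 0 w 0)) (nth 0 w 5)) (nth 0 w 1)));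
    first solve_computable.
    apply: (computable_app2 computable_ccons); last solve_computable.
    apply: (computable_app2 He); solve_computable.
  by move=> j [|c [|n [|t [|p []]]]] //= _; elim: j => //= j ->.
apply: (computable_compose (Fs := [:: fun v => csize (nth 0 v 0); fun v => nth 0 v 0;
   fun v => csize (nth 0 v 0); fun v => nth 0 v 1; fun v => nth 0 v 2]) Hrec) => //.
by move=> F [<-|[<-|[<-|[<-|[<-|[]]]]]]; solve_computable.
Qed.

Definition ccat c1 c2 := cmap_cat (fun x _ => x) c1 c2 0.

Lemma ccat_enc s t : ccat (enc s) (enc t) = enc (s ++ t).
Proof. by rewrite /ccat cmap_cat_enc map_id. Qed.

Lemma computable_ccat : computable2 ccat.
Proof.
have He : computable2 (fun x _ => x) by exact: computable_proj.
by apply: (computable_app3 (computable_cmap_cat He)); solve_computable.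
Qed.
#[export] Hint Resolve computable_ccat : computable.

Definition cnseq n x := iter n (ccons x) 0.

Lemma cnseq_enc n x : cnseq n x = enc (nseq n x).
Proof. by elim: n => //= n IH; rewrite /cnseq /= -/(cnseq n x) IH. Qed.

Lemma computable_cnseq : computable2 cnseq.
Proof.
apply: (@computable_by_primrec 1 _ (fun=> 0) (fun w => ccons (nth 0 w 2) (nth 0 w 1)));
  try solve_computable.
by move=> n [|x []] //= _; elim: n => //= n ->.
Qed.
#[export] Hint Resolve computable_cnseq : computable.

(* Course-of-values recursion: [cov_rec s x p = s x h p] where [h] codes *)
(* the list of all earlier values, read back with [cov_lookup h x m].     *)
Fixpoint cov_hist (s : nat -> nat -> nat -> nat) x p :=
  if x is x'.+1 then ccons (s x' (cov_hist s x' p) p) (cov_hist s x' p) else 0.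
Definition cov_rec s x p := s x (cov_hist s x p) p.
Definition cov_lookup h x m := cnth h (x - 1 - m).

Lemma computable_cov_lookup : computable3 cov_lookup.
Proof. rewrite /computable3 /cov_lookup; solve_computable. Qed.
#[export] Hint Resolve computable_cov_lookup : computable.

Lemma computable_cov_rec s : computable3 s -> computable2 (cov_rec s).
Proof.
move=> Hs.
have Hh : computable2 (cov_hist s).
  apply: (@computable_by_primrec 1 _ (fun=> 0)
    (fun w => ccons (s (nth 0 w 0) (nth 0 w 1) (nth 0 w 2)) (nth 0 w 1)));
    first solve_computable.
    apply: (computable_app2 computable_ccons); last solve_computable.
    apply: (computable_app3 Hs); solve_computable.
  by move=> x [|p []] //= _; elim: x => //= x ->.
by apply: (computable_app3 Hs); solve_computable.
Qed.

Lemma cov_lookup_hist s x p m : m < x -> cov_lookup (cov_hist s x p) x m = cov_rec s m p.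
Proof.
have histE y : cov_hist s y p = enc [seq cov_rec s i p | i <- rev (iota 0 y)].
  elim: y => // y IH.
  by rewrite -[y.+1]addn1 iotaD rev_cat /= add0n -IH addn1.
move=> lt_mx; rewrite /cov_lookup histE cnth_enc (nth_map 0); last first.
  by rewrite size_rev size_iota; lia.
by rewrite nth_rev size_iota ?nth_iota; [congr cov_rec | |]; lia.
Qed.

Lemma cov_rec_ind s (P : nat -> nat -> Prop) p :
  (forall x h, (forall m, m < x -> P m (cov_lookup h x m)) -> P x (s x h p)) ->
  forall x, P x (cov_rec s x p).
Proof.
move=> Hstep x; elim: x {-2}x (leqnn x) => [|n IH] x le_xn; apply: Hstep => m lt_mx.
  by lia.
by rewrite cov_lookup_hist //; apply: IH; lia.
Qed.

(** * Computing the construction on codes *)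

Lemma enc_rhs_sym d a : enc_rhs (RSym d a) = cpair 0 (cpair d (enc (map enc_rhs a))).
Proof. by rewrite /= -enc_seq_map; congr (cpair 0 (cpair d _)); elim: a => //= x a ->. Qed.

Lemma enc_rhs_call q i a :
  enc_rhs (RCall q i a) = cpair 2 (cpair q (cpair i (enc (map enc_rhs a)))).
Proof.
by rewrite /= -enc_seq_map; congr (cpair 2 (cpair q (cpair i _))); elim: a => //= x a ->.
Qed.

(* One step of a course-of-values recursion computing [shift_states K] on *)
(* codes: an odd argument [2e + 1] stands for the rhs of code [e], an even *)
(* argument [2e] for the list of rhs of code [e].  Every recursive call is *)
(* on a smaller argument since [cpair] dominates its components.           *)
Definition shift_sym_step y h :=
  cpair 0 (cpair (unpair1 (unpair2 y./2)) (cov_lookup h y (2 * unpair2 (unpair2 y./2)))).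
Definition shift_call_step y h K :=
  cpair 2 (cpair (unpair1 (unpair2 y./2) + K) (cpair (unpair1 (unpair2 (unpair2 y./2)))
    (cov_lookup h y (2 * unpair2 (unpair2 (unpair2 y./2)))))).
Definition shift_rhs_step y h K :=
  ifnz (eqn_nat (unpair1 y./2) 0) (shift_sym_step y h)
    (ifnz (eqn_nat (unpair1 y./2) 1) y./2 (shift_call_step y h K)).
Definition shift_list_step y h :=
  ifnz y./2 (ccons (cov_lookup h y (2 * chead y./2).+1) (cov_lookup h y (2 * cbehead y./2))) 0.
Definition shift_step y h K := ifnz (odd_nat y) (shift_rhs_step y h K) (shift_list_step y h).

Lemma computable_shift_step : computable3 shift_step.
Proof.
rewrite /computable3 /shift_step /shift_rhs_step /shift_sym_step /shift_call_step /shift_list_step.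
solve_computable.
Qed.

Definition shift_step_spec K y v :=
  (forall r, y = (2 * enc_rhs r).+1 -> v = enc_rhs (shift_states K r)) /\
  (forall l, y = 2 * enc (map enc_rhs l) -> v = enc (map enc_rhs (map (shift_states K) l))).

Lemma shift_step_rhs K y h r : y = (2 * enc_rhs r).+1 ->
  (forall l, 2 * enc (map enc_rhs l) < y ->
     cov_lookup h y (2 * enc (map enc_rhs l)) = enc (map enc_rhs (map (shift_states K) l))) ->
  shift_step y h K = enc_rhs (shift_states K r).
Proof.
move=> ey IH; have odd_y : odd_nat y = 1 by rewrite ey /odd_nat /= mul2n odd_double.
have half_y : y./2 = enc_rhs r by rewrite ey mul2n -[(_).+1]/(true + _) half_bit_double.
rewrite /shift_step odd_y ifnzS /shift_rhs_step /shift_sym_step /shift_call_step half_y.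
case: r ey {half_y} => [d a|j|q i a] ey.
- rewrite enc_rhs_sym !(unpair1E, unpair2E) eqn_nat_refl ifnzS IH ?enc_rhs_sym // ey.
  rewrite enc_rhs_sym; have := leq_cpairr d (enc (map enc_rhs a)).
  by have := leq_cpairr 0 (cpair d (enc (map enc_rhs a))); lia.
- by rewrite /= unpair1E eqn_nat_neq // ifnz0 eqn_nat_refl ifnzS.
- rewrite enc_rhs_call !(unpair1E, unpair2E) !eqn_nat_neq // !ifnz0 IH ?enc_rhs_call // ey.
  rewrite enc_rhs_call; have := leq_cpairr i (enc (map enc_rhs a)).
  have := leq_cpairr q (cpair i (enc (map enc_rhs a))).
  by have := leq_cpairr 2 (cpair q (cpair i (enc (map enc_rhs a)))); lia.
Qed.

Lemma shift_step_list K y h l : y = 2 * enc (map enc_rhs l) ->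
  (forall r, (2 * enc_rhs r).+1 < y ->
     cov_lookup h y (2 * enc_rhs r).+1 = enc_rhs (shift_states K r)) ->
  (forall l', 2 * enc (map enc_rhs l') < y ->
     cov_lookup h y (2 * enc (map enc_rhs l')) = enc (map enc_rhs (map (shift_states K) l'))) ->
  shift_step y h K = enc (map enc_rhs (map (shift_states K) l)).
Proof.
move=> ey IHr IHl; have odd_y : odd_nat y = 0 by rewrite ey /odd_nat mul2n odd_double.
have half_y : y./2 = enc (map enc_rhs l) by rewrite ey mul2n doubleK.
rewrite /shift_step odd_y ifnz0 /shift_list_step half_y.
case: l ey {half_y} => [|r l] ey; first by rewrite ifnz0.
have lt_r : (2 * enc_rhs r).+1 < y.
  by rewrite ey map_cons enc_cons /ccons; have := leq_cpairl (enc_rhs r) (enc (map enc_rhs l)); lia.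
have lt_l : 2 * enc (map enc_rhs l) < y.
  by rewrite ey map_cons enc_cons /ccons; have := leq_cpairr (enc_rhs r) (enc (map enc_rhs l)); lia.
by rewrite !map_cons !enc_cons {1}/ccons ifnzS chead_cons cbehead_cons IHr // IHl.
Qed.

Lemma shift_stepP K y : shift_step_spec K y (cov_rec shift_step y K).
Proof.
apply: cov_rec_ind => {}y h IH; split=> [r|l] ey.
  by apply: shift_step_rhs ey _ => l lt_ly; apply: (proj2 (IH _ lt_ly)).
apply: shift_step_list ey _ _ => [r|l'] lt_y.
  exact: (proj1 (IH _ lt_y)).
exact: (proj2 (IH _ lt_y)).
Qed.

Definition cmap_shift K c := cov_rec shift_step (2 * c) K.

Lemma cmap_shift_enc K l :
  cmap_shift K (enc (map enc_rhs l)) = enc (map enc_rhs (map (shift_states K) l)).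
Proof. exact: (proj2 (shift_stepP K _) l erefl). Qed.

Lemma computable_cmap_shift : computable2 cmap_shift.
Proof.
have H := computable_cov_rec computable_shift_step.
by rewrite /computable2 /cmap_shift; apply: (computable_app2 H); solve_computable.
Qed.
#[export] Hint Resolve computable_cmap_shift : computable.

Definition leaf_code dl := cpair 0 (cpair dl 0).
Definition root_code dl K2 := cpair 2 (cpair 1 (cpair 1
  (ccons (cpair 2 (cpair 2 (cpair 0 0))) (ccons (cpair 2 (cpair K2 (cpair 0 0)))
     (ccons (leaf_code dl) 0))))).
Definition branch_code dl :=
  let call z := cpair 2 (cpair 1 (cpair 0 (ccons (cpair 1 0) (ccons (cpair 1 1)
    (ccons (cpair 0 (cpair dl.+1 (ccons (cpair 1 2) (ccons (cpair 1 z) 0)))) 0))))) in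
  cpair 0 (cpair dl.+2 (ccons (call 0) (ccons (call 1) 0))).

Lemma leaf_codeE dl : leaf_code dl = enc_rhs (leaf_rhs dl). Proof. by []. Qed.
Lemma branch_codeE dl : branch_code dl = enc_rhs (branch_rhs dl). Proof. by []. Qed.

Lemma computable_leaf_code : computable1 leaf_code.
Proof. rewrite /computable1 /leaf_code; solve_computable. Qed.
Lemma computable_root_code : computable2 root_code.
Proof. rewrite /computable2 /root_code /leaf_code; solve_computable. Qed.
Lemma computable_branch_code : computable1 branch_code.
Proof. rewrite /computable1 /branch_code; solve_computable. Qed.
#[export] Hint Resolve computable_leaf_code computable_root_code computable_branch_code
  : computable.

(* [p] packs the shift [K], the nullary symbol [c] and the code of the *)
(* default rhs [leaf_rhs dl] as [cpair K (cpair c (leaf_code dl))].     *)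
Definition copy_row_code row p :=
  let r := cnth_dflt row (unpair1 (unpair2 p)) (unpair2 (unpair2 p)) in
  cmap_shift (unpair1 p) (ccat row (ccons r (ccons r (ccons r 0)))).

Lemma computable_copy_row_code : computable2 copy_row_code.
Proof. rewrite /computable2 /copy_row_code; solve_computable. Qed.

Lemma computable_cmap_copy_row : computable3 (cmap_cat copy_row_code).
Proof. exact: computable_cmap_cat computable_copy_row_code. Qed.
#[export] Hint Resolve computable_cmap_copy_row : computable.

Definition enc_row (row : seq rhs) := enc (map enc_rhs row).

Lemma cmap_copy_row_enc dl c K R :
  cmap_cat copy_row_code (enc (map enc_row R)) 0 (cpair K (cpair c (leaf_code dl)))
  = enc (map enc_row (map (copy_row dl c K) R)).
Proof.
rewrite -[0]/(enc [::]) cmap_cat_enc cats0 -!map_comp; congr enc; apply: eq_map => row /=.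
rewrite /copy_row_code !(unpair1E, unpair2E) cnth_dflt_enc leaf_codeE nth_map_dflt.
set r := nth (leaf_rhs dl) row c.
have -> : ccons (enc_rhs r) (ccons (enc_rhs r) (ccons (enc_rhs r) 0)) = enc_row (nseq 3 r) by [].
by rewrite ccat_enc -map_cat cmap_shift_enc.
Qed.

Definition equiv_test_code e1 e2 :=
  let S := unpair1 e1 in let D := unpair1 (unpair2 e1) in
  let Q1 := unpair1 (unpair2 (unpair2 e1)) in let R1 := unpair2 (unpair2 (unpair2 e1)) in
  let Q2 := unpair1 (unpair2 (unpair2 e2)) in let R2 := unpair2 (unpair2 (unpair2 e2)) in
  let k := csize S in let dl := csize D in let K2 := 2 + csize Q1 in
  let c := cfind0 S in
  cpair (ccat S (ccons 2 (ccons 1 (ccons 0 0))))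
   (cpair (ccat D (ccons 0 (ccons 2 (ccons 2 0))))
    (cpair (ccons 0 (ccons 3 (ccat Q1 Q2)))
     (ccons (ccat (cnseq k (leaf_code dl)) (ccons (ifnz (k - c) (root_code dl K2) (leaf_code dl))
               (ccons (leaf_code dl) (ccons (leaf_code dl) 0))))
      (ccons (ccat (cnseq k (cpair 1 2))
                (ccons (cpair 1 2) (ccons (branch_code dl) (ccons (cpair 1 2) 0))))
       (ccat (cmap_cat copy_row_code R1 0 (cpair 2 (cpair c (leaf_code dl))))
             (cmap_cat copy_row_code R2 0 (cpair K2 (cpair c (leaf_code dl))))))))).

Lemma computable_equiv_test_code : computable2 equiv_test_code.
Proof. by rewrite /computable2 /equiv_test_code; solve_computable. Qed.

Lemma enc_rules R : enc_seq (enc_seq enc_rhs) R = enc (map enc_row R).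
Proof. by rewrite enc_seq_map; congr enc; apply: eq_map => row; apply: enc_seq_map. Qed.

Lemma equiv_test_code_enc M1 M2 :
  equiv_test_code (enc_mtt M1) (enc_mtt M2) = enc_mtt (equiv_test_mtt M1 M2).
Proof.
have enc3 a b c : enc [:: a; b; c] = ccons a (ccons b (ccons c 0)) by [].
case: M1 M2 => S D Q1 R1 [S2 D2 Q2 R2]; rewrite /equiv_test_code /enc_mtt /equiv_test_mtt.
cbn [in_ranks out_ranks st_ranks rules].
rewrite !(unpair1E, unpair2E) !enc_rules !cmap_copy_row_enc !csize_enc cfind0_enc.
rewrite -!enc3 !ccat_enc -!enc_cons !map_cons map_cat !cnseq_enc ifnz_lt.
congr (cpair _ (cpair _ (cpair _ (enc (_ :: _ :: _))))).
  rewrite /enc_row /root_row map_cat map_nseq ccat_enc /nullary_sym.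
  by case: ltnP.
by rewrite /enc_row /branch_row map_cat map_nseq branch_codeE ccat_enc.
Qed.

Theorem mainTheorem12 :
  exists p : murec,
    forall M1 M2 : mtt,
      wf_mtt M1 -> wf_mtt M2 ->
      in_ranks M1 = in_ranks M2 -> out_ranks M1 = out_ranks M2 ->
      LSOI M1 -> LSOI M2 ->
      exists M : mtt,
        [/\ mueval p [:: enc_mtt M1; enc_mtt M2] (enc_mtt M), wf_mtt M &
            (LSOI M <-> mtt_equiv M1 M2)].
Proof.
have [P computes_P] := computable_equiv_test_code.
exists P => M1 M2 wf_M1 wf_M2 same_in same_out lsoi_M1 _.
exists (equiv_test_mtt M1 M2); split.
- by rewrite -equiv_test_code_enc; apply: computes_P.
- exact: wf_equiv_test_mtt.
- split; first exact: equiv_of_LSOI_equiv_test.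
  exact: LSOI_equiv_test.
Qed.
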